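(* Let $A,B,C,D$ be real random variables on a common probability space with finite second moments, $\mathrm{Var}(B)>0$, $\mathrm{Var}(D)>0$, $|\mathrm{Corr}(B,D)|<1$, $\mathbb{E}[A]\neq0$, $\mathbb{E}[C]\neq 0$, and set $R=\mathbb{E}[A]/\mathbb{E}[C]$. Let $n\ge1$ and let $(A_i,B_i,C_i,D_i)_{i=1,\dots,n}$ be i.i.d. copies of $(A,B,C,D)$. For $\alpha,\beta\in\mathbb{R}$ put $N_\alpha=\overline{A_n}+\alpha(\mathbb{E}[B]-\overline{B_n})$ and $M_\beta=\overline{C_n}+\beta(\mathbb{E}[D]-\overline{D_n})$. Then the function $(\alpha,\beta)\mapsto\Phi(N_\alpha,M_\beta)$ on $\mathbb{R}^2$ has a unique minimizer $(\alpha_o,\beta_o)$, given by $$\alpha_o=\frac{\mathrm{Var}(D)\mathrm{Cov}(A,B)-R\,\mathrm{Var}(D)\mathrm{Cov}(B,C)+R\,\mathrm{Cov}(B,D)\mathrm{Cov}(C,D)-\mathrm{Cov}(B,D)\mathrm{Cov}(A,D)}{\mathrm{Var}(B)\mathrm{Var}(D)-\mathrm{Cov}(B,D)^2},$$ $$\beta_o=\frac{\mathrm{Cov}(B,D)\mathrm{Cov}(A,B)-R\,\mathrm{Cov}(B,D)\mathrm{Cov}(B,C)+R\,\mathrm{Var}(B)\mathrm{Cov}(C,D)-\mathrm{Var}(B)\mathrm{Cov}(A,D)}{R\big(\mathrm{Var}(B)\mathrm{Var}(D)-\mathrm{Cov}(B,D)^2\big)},$$ and in particular $\Phi(N_{\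alpha_o},M_{\beta_o})\le\Phi(\overline{A_n},\overline{C_n})$.
   Context: For a random variable $X$, $\overline{X_n}=\frac1n\sum_{i=1}^n X_i$ denotes the sample mean of the i.i.d. copies $X_1,\dots,X_n$. For real random variables $X,Z$ with finite second moments and $\mathbb{E}[Z]\neq0$, define the first-order (delta-method) approximation of the variance of the ratio $X/Z$: $$\Phi(X,Z)=\frac{\mathrm{Var}(X)}{\mathbb{E}[Z]^2}+\frac{\mathbb{E}[X]^2}{\mathbb{E}[Z]^4}\mathrm{Var}(Z)-2\frac{\mathbb{E}[X]}{\mathbb{E}[Z]^3}\mathrm{Cov}(X,Z).$$ $\Phi(N_\alpha,M_\beta)$ is the paper's variance of the CV/CV ratio estimator $N_\alpha/M_\beta$ of $R$, and $\Phi(\overline{A_n},\overline{C_n})=\Phi(N_0,M_0)$ is that of the Monte Carlo ratio estimator $\overline{A_n}/\overline{C_n}$; $\mathbb{E}[B],\mathbb{E}[D]$ are known constants. $\mathrm{Corr}(B,D)=\mathrm{Cov}(B,D)/\sqrt{\mathrm{Var}(B)\mathrm{Var}(D)}$. *)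

From HB Require Import structures.
From mathcomp Require Import all_boot all_order all_algebra.
From mathcomp Require Import all_classical all_reals all_analysis.
Set Implicit Arguments. Unset Strict Implicit. Unset Printing Implicit Defensive.
Import Order.TTheory GRing.Theory Num.Theory.
Local Open Scope classical_set_scope.
Local Open Scope ring_scope.

Section defs.
Context {d : measure_display} {T : measurableType d} {R : realType}.
Variable P : probability T R.

(* real-valued moments (the random variables considered have finite second
   moments, so these are the finite values of the library's extended-real ones) *)
Definition Ex (X : T -> R) : R := fine ('E_P[X])%E.
Definition Var (X : T -> R) : R := fine ('V_P[X]).
Definition Cov (X Y : T -> R) : R := fine (covariance P X Y).
Definition Corr (X Y : T -> R) : R := Cov X Y / Num.sqrt (Var X * Var Y).

(* first-order (delta-method) variance of the ratio X/Z *)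
Definition Phi (X Z : T -> R) : R :=
  Var X / Ex Z ^+ 2 + Ex X ^+ 2 / Ex Z ^+ 4 * Var Z
  - 2 * (Ex X / Ex Z ^+ 3) * Cov X Z.

Definition vec4 (A B C D : T -> R) : T -> (R * R * R * R)%type :=
  fun t => (A t, B t, C t, D t).

Definition same_law (V W : T -> (R * R * R * R)%type) : Prop :=
  forall S : set (R * R * R * R)%type, measurable S ->
    P (V @^-1` S) = P (W @^-1` S).

Definition mutually_independent n (V : 'I_n -> T -> (R * R * R * R)%type) : Prop :=
  forall (J : {set 'I_n}) (S : 'I_n -> set (R * R * R * R)%type),
    (forall j, measurable (S j)) ->
    P (\bigcap_(j in [set j | j \in J]) (V j @^-1` S j)) =
    (\prod_(j in J) P (V j @^-1` S j))%E.

End defs.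

Definition smean {T : Type} {R : realType} n (X : 'I_n -> T -> R) : T -> R :=
  fun t => (n%:R)^-1 * \sum_(i < n) X i t.

From HB Require Import structures.
From mathcomp Require Import all_boot all_order all_algebra.
From mathcomp Require Import all_classical all_reals all_analysis.
From mathcomp Require Import measurable_realfun.
From mathcomp Require Import ring.
Import Order.TTheory GRing.Theory Num.Theory.
Local Open Scope classical_set_scope.
Local Open Scope ring_scope.

(* Both estimators are sample means of the single-sample control variates
   A + alpha (E[B] - B) and C + beta (E[D] - D), whose means are E[A] and E[C].
   Samples are identically distributed, and distinct samples are uncorrelated
   because the joint law of two independent samples is the product of their
   laws (Fubini).  Hence Phi(N_alpha, M_beta) is 1/n times the single-sample
   value, an explicit quadratic polynomial in (alpha, beta) whose quadratic
   part is (Var B x^2 - 2 Cov(B,D) x y + Var D y^2) / E[C]^2 in x = alpha,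
   y = R beta.  Since |Corr(B,D)| < 1 this form is positive definite, so
   completing the square around (alpha_o, beta_o) gives the unique minimiser;
   alpha = beta = 0 is the Monte Carlo estimator. *)

Section quadratic_form.
Context {R : realFieldType} {p q s : R}.
Hypotheses (p_gt0 : 0 < p) (q2_lt : q ^+ 2 < p * s).

Let det_gt0 : 0 < p * s - q ^+ 2. Proof. by rewrite subr_gt0. Qed.

Let quad_formE x y : p * (p * x ^+ 2 - 2 * q * x * y + s * y ^+ 2) =
  (p * x - q * y) ^+ 2 + (p * s - q ^+ 2) * y ^+ 2.
Proof. by ring. Qed.

Lemma quad_form_ge0 x y : 0 <= p * x ^+ 2 - 2 * q * x * y + s * y ^+ 2.
Proof.
rewrite -(pmulr_rge0 _ p_gt0) quad_formE addr_ge0 ?sqr_ge0 //.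
by rewrite mulr_ge0 ?sqr_ge0 // ltW.
Qed.

Lemma quad_form_eq0 x y : p * x ^+ 2 - 2 * q * x * y + s * y ^+ 2 = 0 ->
  x = 0 /\ y = 0.
Proof.
move=> /(congr1 (GRing.mul p)); rewrite quad_formE mulr0 => /eqP.
rewrite paddr_eq0 ?sqr_ge0 ?(mulr_ge0 (ltW det_gt0) (sqr_ge0 y)) //.
rewrite !sqrf_eq0 => /andP[/eqP xy0].
rewrite mulf_eq0 (gt_eqF det_gt0) sqrf_eq0 /= => /eqP y0.
move: xy0; rewrite y0 mulr0 subr0 => /eqP.
by rewrite mulf_eq0 (gt_eqF p_gt0) => /eqP.
Qed.

End quadratic_form.

Section control_variate_optimum.
Context {R : realFieldType}.
Variables (vA cAB vB vC cCD vD cAC cAD cBC cBD eA eC : R).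

Definition cv_ratio_var (a b : R) : R :=
  (vA - 2 * a * cAB + a ^+ 2 * vB) / eC ^+ 2
  + eA ^+ 2 / eC ^+ 4 * (vC - 2 * b * cCD + b ^+ 2 * vD)
  - 2 * (eA / eC ^+ 3) * (cAC - b * cAD - a * cBC + a * b * cBD).

Local Notation r := (eA / eC).
Local Notation det := (vB * vD - cBD ^+ 2).

Definition cv_alpha_opt : R :=
  (vD * cAB - r * vD * cBC + r * cBD * cCD - cBD * cAD) / det.
Definition cv_beta_opt : R :=
  (cBD * cAB - r * cBD * cBC + r * vB * cCD - vB * cAD) / (r * det).

Hypotheses (vB_gt0 : 0 < vB) (det_gt0 : cBD ^+ 2 < vB * vD).
Hypotheses (eA_neq0 : eA != 0) (eC_neq0 : eC != 0).

Let r_neq0 : r != 0. Proof. by rewrite mulf_neq0 ?invr_eq0. Qed.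

Lemma cv_ratio_var_sub_opt a b :
  cv_ratio_var a b - cv_ratio_var cv_alpha_opt cv_beta_opt =
  (vB * (a - cv_alpha_opt) ^+ 2
   - 2 * cBD * (a - cv_alpha_opt) * (r * (b - cv_beta_opt))
   + vD * (r * (b - cv_beta_opt)) ^+ 2) / eC ^+ 2.
Proof.
have det_neq0 : det != 0 by rewrite subr_eq0 gt_eqF.
rewrite /cv_ratio_var /cv_alpha_opt /cv_beta_opt.
by field; rewrite eC_neq0 det_neq0 eA_neq0.
Qed.

Lemma cv_ratio_var_min a b :
  cv_ratio_var cv_alpha_opt cv_beta_opt <= cv_ratio_var a b.
Proof.
rewrite -subr_ge0 cv_ratio_var_sub_opt divr_ge0 ?quad_form_ge0 //.
exact: sqr_ge0.
Qed.

Lemma cv_ratio_var_argmin a b :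
  (forall a' b', cv_ratio_var a b <= cv_ratio_var a' b') ->
  a = cv_alpha_opt /\ b = cv_beta_opt.
Proof.
move=> /(_ cv_alpha_opt cv_beta_opt) min_ab.
have : cv_ratio_var a b - cv_ratio_var cv_alpha_opt cv_beta_opt = 0.
  by apply/eqP; rewrite eq_le subr_le0 min_ab subr_ge0 cv_ratio_var_min.
rewrite cv_ratio_var_sub_opt => /eqP; rewrite mulf_eq0 invr_eq0 expf_eq0 /=.
rewrite (negbTE eC_neq0) orbF => /eqP /(quad_form_eq0 vB_gt0 det_gt0).
move=> [/eqP + /eqP].
rewrite subr_eq0 mulf_eq0 (negbTE r_neq0) subr_eq0 /=.
by move=> /eqP -> /eqP ->.
Qed.

End control_variate_optimum.

Lemma corr_lt1_sqr_lt (R : rcfType) (vX vY c : R) : 0 < vX -> 0 < vY ->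
  `|c / Num.sqrt (vX * vY)| < 1 -> c ^+ 2 < vX * vY.
Proof.
move=> vX_gt0 vY_gt0; have vXY_gt0 := mulr_gt0 vX_gt0 vY_gt0.
have sqrt_gt0 : 0 < Num.sqrt (vX * vY) by rewrite sqrtr_gt0.
rewrite normrM normfV (gtr0_norm sqrt_gt0) ltr_pdivrMr // mul1r.
move=> c_lt; rewrite -real_normK ?num_real // -(sqr_sqrtr (ltW vXY_gt0)).
by rewrite ltr_pXn2r ?nnegrE ?normr_ge0 ?sqrtr_ge0.
Qed.

Section real_moments.
Context {d : measure_display} {T : measurableType d} {R : realType}
  {P : probability T R}.
Local Notation L2 X := (X \in Lfun P 2%:E).
Implicit Types (X Y Z : T -> R) (a c : R).

(* The closure lemmas of [Lfun] need this instance of [1 <= p]. *)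
Let one_le2 : (1 <= 2%:E :> \bar R)%E. Proof. by rewrite lee_fin ler1n. Qed.

Lemma Lfun2_Lfun1 {X} : L2 X -> X \in Lfun P 1.
Proof. exact/Lfun_subset12/fin_num_measure. Qed.

Lemma Lfun2D X Y : L2 X -> L2 Y -> L2 (X \+ Y).
Proof. exact: rpredD. Qed.

Lemma Lfun2Z a X : L2 X -> L2 (a \o* X).
Proof. exact: Lfun_scale. Qed.

Lemma Lfun2_sum (I : finType) (F : I -> T -> R) :
  (forall i, L2 (F i)) -> L2 (\sum_i F i).
Proof. by move=> F2; apply: rpred_sum => i _; exact: F2. Qed.

Lemma ExE X : L2 X -> ('E_P[X] = (Ex P X)%:E)%E.
Proof. by move=> X2; rewrite fineK // expectation_fin_num // Lfun2_Lfun1. Qed.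

Lemma ExD X Y : L2 X -> L2 Y -> Ex P (X \+ Y) = Ex P X + Ex P Y.
Proof.
by move=> X2 Y2; rewrite /Ex expectationD ?Lfun2_Lfun1 // ExE // ExE.
Qed.

Lemma ExZ a X : L2 X -> Ex P (a \o* X) = a * Ex P X.
Proof. by move=> X2; rewrite /Ex expectationZl ?Lfun2_Lfun1 // ExE. Qed.

Lemma Ex_cst c : Ex P (cst c) = c.
Proof. by rewrite /Ex expectation_cst. Qed.

Lemma Ex_sum (I : finType) (F : I -> T -> R) : (forall i, L2 (F i)) ->
  Ex P (\sum_i F i) = \sum_i Ex P (F i).
Proof.
move=> F2.
apply: (big_ind2 (fun f r => L2 f /\ Ex P f = r) _ _
  (fun i _ => conj (F2 i) erefl)).2.
- by split; [exact: rpred0 | exact: Ex_cst].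
- by move=> f r g s [f2 <-] [g2 <-]; split; [exact: Lfun2D | exact: ExD].
Qed.

Lemma CovEf X Y : L2 X -> L2 Y -> covariance P X Y = (Cov P X Y)%:E.
Proof.
move=> X2 Y2; have XY1 := Lfun2_mul_Lfun1 X2 Y2.
by rewrite fineK // (covariance_fin_num (Lfun2_Lfun1 X2) (Lfun2_Lfun1 Y2)).
Qed.

Lemma CovE X Y : L2 X -> L2 Y -> Cov P X Y = Ex P (X * Y) - Ex P X * Ex P Y.
Proof.
move=> X2 Y2; have XY1 := Lfun2_mul_Lfun1 X2 Y2.
have EX := expectation_fin_num (Lfun2_Lfun1 X2).
have EY := expectation_fin_num (Lfun2_Lfun1 Y2).
have EXY := expectation_fin_num XY1.
rewrite /Cov (covarianceE (Lfun2_Lfun1 X2) (Lfun2_Lfun1 Y2) XY1) /Ex.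
by rewrite fineB ?fineM // fin_numM.
Qed.

Lemma Var_Cov X : Var P X = Cov P X X.
Proof. by []. Qed.

Lemma CovC X Y : Cov P X Y = Cov P Y X.
Proof. by rewrite /Cov covarianceC. Qed.

Lemma CovDl X Y Z : L2 X -> L2 Y -> L2 Z ->
  Cov P (X \+ Y) Z = Cov P X Z + Cov P Y Z.
Proof. by move=> X2 Y2 Z2; rewrite /Cov covarianceDl // !CovEf. Qed.

Lemma CovDr X Y Z : L2 X -> L2 Y -> L2 Z ->
  Cov P X (Y \+ Z) = Cov P X Y + Cov P X Z.
Proof. by move=> X2 Y2 Z2; rewrite CovC CovDl // !(CovC X). Qed.

Lemma CovZl a X Y : L2 X -> L2 Y -> Cov P (a \o* X) Y = a * Cov P X Y.
Proof.
move=> X2 Y2; have XY1 := Lfun2_mul_Lfun1 X2 Y2.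
by rewrite /Cov (covarianceZl _ (Lfun2_Lfun1 X2) (Lfun2_Lfun1 Y2)) // CovEf.
Qed.

Lemma CovZr a X Y : L2 X -> L2 Y -> Cov P X (a \o* Y) = a * Cov P X Y.
Proof. by move=> X2 Y2; rewrite CovC CovZl // CovC. Qed.

Lemma Cov_cst_l c X : Cov P (cst c) X = 0.
Proof. by rewrite /Cov covariance_cst_l. Qed.

Lemma Cov_cst_r c X : Cov P X (cst c) = 0.
Proof. by rewrite /Cov covariance_cst_r. Qed.

Lemma Cov_suml (I : finType) (F : I -> T -> R) Z : (forall i, L2 (F i)) ->
  L2 Z -> Cov P (\sum_i F i) Z = \sum_i Cov P (F i) Z.
Proof.
move=> F2 Z2.
apply: (big_ind2 (fun f r => L2 f /\ Cov P f Z = r) _ _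
  (fun i _ => conj (F2 i) erefl)).2.
- by split; [exact: rpred0 | exact: Cov_cst_l].
- by move=> f r g s [f2 <-] [g2 <-]; split; [exact: Lfun2D | exact: CovDl].
Qed.

Lemma Cov_sumr (I : finType) (F : I -> T -> R) Z : (forall i, L2 (F i)) ->
  L2 Z -> Cov P Z (\sum_i F i) = \sum_i Cov P Z (F i).
Proof.
by move=> F2 Z2; rewrite CovC Cov_suml //; apply: eq_bigr => i _; rewrite CovC.
Qed.

End real_moments.

Section law_transfer.
Context {d : measure_display} {T : measurableType d} {R : realType}
  {P : probability T R}.
Local Notation L2 X := (X \in Lfun P 2%:E).
Context {d' : measure_display} {Y : measurableType d'}.

Lemma integral_distribution_comp (X : {RV P >-> Y}) (f : Y -> \bar R) :
  measurable_fun [set: Y] f ->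
  (\int[distribution P X]_y f y = \int[P]_x f (X x))%E.
Proof.
move=> mf; rewrite integralE [RHS]integralE.
rewrite ge0_integral_distribution; [|exact: measurable_funepos|by []].
rewrite ge0_integral_distribution; [|exact: measurable_funeneg|by []].
by rewrite -funepos_comp -funeneg_comp.
Qed.

Lemma integrable_distribution_comp (X : {RV P >-> Y}) (f : Y -> R) :
  measurable_fun [set: Y] f -> (f \o X) \in Lfun P 1 ->
  (distribution P X).-integrable [set: Y] (EFin \o f).
Proof.
move=> mf /Lfun1_integrable /integrableP[_ fX_fin].
apply/integrableP; split; first exact/measurable_EFinP.
rewrite integral_distribution_comp //.
by apply: measurableT_comp => //; exact/measurable_EFinP.
Qed.

Context {V W : {RV P >-> Y}}.
Hypothesis VW_law : forall S, measurable S -> P (V @^-1` S) = P (W @^-1` S).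

Lemma integral_same_law (f : Y -> \bar R) : measurable_fun [set: Y] f ->
  (\int[P]_x f (V x) = \int[P]_x f (W x))%E.
Proof.
move=> mf; rewrite -!integral_distribution_comp //.
by apply: eq_measure_integral => S mS _; exact: VW_law.
Qed.

Lemma Lfun_same_law {r : R} {f : Y -> R} : measurable_fun [set: Y] f ->
  (f \o W) \in Lfun P r%:E -> (f \o V) \in Lfun P r%:E.
Proof.
move=> mf /andP[_]; rewrite !inE /= /finite_norm => fW.
apply/andP; split; first by rewrite inE /=; exact: measurableT_comp.
rewrite inE /= /finite_norm; move: fW; rewrite unlock /=.
rewrite (integral_same_law (fun y => (`|f y| `^ r)%:E)) //.
apply/measurable_EFinP; apply: (measurableT_comp (measurable_powR _)) => //.
exact: measurableT_comp.
Qed.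

Lemma Ex_same_law {f : Y -> R} : measurable_fun [set: Y] f ->
  Ex P (f \o V) = Ex P (f \o W).
Proof.
move=> mf; rewrite /Ex !unlock (integral_same_law (EFin \o f)) //.
exact/measurable_EFinP.
Qed.

Lemma Cov_same_law {f g : Y -> R} :
  measurable_fun [set: Y] f -> measurable_fun [set: Y] g ->
  L2 (f \o W) -> L2 (g \o W) ->
  Cov P (f \o V) (g \o V) = Cov P (f \o W) (g \o W).
Proof.
move=> mf mg fW2 gW2.
have [fV2 gV2] := (Lfun_same_law mf fW2, Lfun_same_law mg gW2).
rewrite !CovE // !Ex_same_law //.
by rewrite (@Ex_same_law (fun y => f y * g y)) //; exact: measurable_funM.
Qed.

End law_transfer.

Definition pair_fun {T Y1 Y2 : Type} (U : T -> Y1) (W : T -> Y2) :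
  T -> Y1 * Y2 := fun t => (U t, W t).

Section pair_fun_measurable.
Context d d1 d2 (T : measurableType d) (Y1 : measurableType d1)
  (Y2 : measurableType d2) (U : {mfun T >-> Y1}) (W : {mfun T >-> Y2}).

Lemma measurable_pair_fun : measurable_fun [set: T] (pair_fun U W).
Proof. exact: measurable_fun_pair. Qed.

HB.instance Definition _ :=
  isMeasurableFun.Build _ _ _ _ (pair_fun U W) measurable_pair_fun.

End pair_fun_measurable.

Section independent_pair.
Local Open Scope ereal_scope.
Context {d : measure_display} {T : measurableType d} {R : realType}
  {P : probability T R}.
Local Notation L2 X := (X \in Lfun P 2%:E).
Context {d' : measure_display} {Y : measurableType d'} {U W : {RV P >-> Y}}.
Hypothesis UW_indep : forall S S', measurable S -> measurable S' ->
  P (U @^-1` S `&` W @^-1` S') = P (U @^-1` S) * P (W @^-1` S').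

Lemma distribution_pair_indep S : measurable S ->
  (distribution P U \x distribution P W) S = distribution P (pair_fun U W) S.
Proof.
move=> mS; apply: product_measure_unique => [A B mA mB|//].
exact: UW_indep.
Qed.

Lemma expectation_indepM {f g : Y -> R} :
  measurable_fun [set: Y] f -> measurable_fun [set: Y] g ->
  L2 (f \o U) -> L2 (g \o W) ->
  'E_P[(f \o U) * (g \o W)] = 'E_P[f \o U] * 'E_P[g \o W].
Proof.
move=> mf mg fU2 gW2.
pose F (z : Y * Y) := (f z.1 * g z.2)%:E.
have mF : measurable_fun [set: Y * Y] F.
  by apply/measurable_EFinP; apply: measurable_funM; exact: measurableT_comp.
have EFE : 'E_P[(f \o U) * (g \o W)] =
    \int[distribution P U \x distribution P W]_z F z.
  rewrite (eq_measure_integral _ (fun S mS _ => distribution_pair_indep S mS)).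
  by rewrite integral_distribution_comp // unlock.
have gW1 := Lfun2_Lfun1 gW2.
have F_int :
    (distribution P U \x distribution P W).-integrable [set: Y * Y] F.
  apply/integrableP; split => //.
  rewrite (eq_measure_integral _ (fun S mS _ => distribution_pair_indep S mS)).
  rewrite integral_distribution_comp; last exact: measurableT_comp.
  by have /Lfun1_integrable/integrableP[] := Lfun2_mul_Lfun1 fU2 gW2.
rewrite EFE -integral12_prod_meas1 //.
have fubini_FE x : fubini_F (distribution P W) F x = (f x)%:E * 'E_P[g \o W].
  rewrite /fubini_F /F; under eq_integral do rewrite /= EFinM.
  rewrite integralZl //; last exact: integrable_distribution_comp.
  by rewrite integral_distribution_comp ?unlock //; exact/measurable_EFinP.
under eq_integral do rewrite fubini_FE.
rewrite -(fineK (expectation_fin_num gW1)) integralZr //; last first.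
  exact/integrable_distribution_comp/Lfun2_Lfun1.
by rewrite integral_distribution_comp ?unlock //; exact/measurable_EFinP.
Qed.

Lemma Cov_indep {f g : Y -> R} :
  measurable_fun [set: Y] f -> measurable_fun [set: Y] g ->
  L2 (f \o U) -> L2 (g \o W) -> Cov P (f \o U) (g \o W) = 0%R.
Proof.
move=> mf mg fU2 gW2.
rewrite CovE // /Ex expectation_indepM // fineM ?subrr //.
- exact/expectation_fin_num/Lfun2_Lfun1.
- exact/expectation_fin_num/Lfun2_Lfun1.
Qed.

End independent_pair.

Lemma smeanE {T : Type} {R : realType} n (X : 'I_n -> T -> R) :
  smean X = (n%:R^-1 \o* \sum_i X i)%R.
Proof. by apply: funext => t; rewrite /smean /= fct_sumE mulrC. Qed.

Section iid_sample_mean.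
Context {d : measure_display} {T : measurableType d} {R : realType}
  {P : probability T R}.
Local Notation L2 X := (X \in Lfun P 2%:E).
Context {d' : measure_display} {Y : measurableType d'} {n : nat}
  {V : 'I_n -> {RV P >-> Y}} {V0 : {RV P >-> Y}}.
Hypothesis V_law :
  forall i S, measurable S -> P (V i @^-1` S) = P (V0 @^-1` S).
Hypothesis V_indep : forall i j, i != j ->
  forall S S', measurable S -> measurable S' ->
  P (V i @^-1` S `&` V j @^-1` S') = (P (V i @^-1` S) * P (V j @^-1` S'))%E.
Hypothesis n_gt0 : (0 < n)%N.

Let Lfun2_sample {f : Y -> R} : measurable_fun [set: Y] f -> L2 (f \o V0) ->
  forall i, L2 (f \o V i).
Proof. by move=> mf f2 i; apply: (Lfun_same_law (V_law i) mf). Qed.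

Let n_neq0 : (n%:R : R) != 0.
Proof. by rewrite pnatr_eq0 -lt0n. Qed.

Lemma Ex_smean_iid (f : Y -> R) : measurable_fun [set: Y] f -> L2 (f \o V0) ->
  Ex P (smean (fun i => f \o V i)) = Ex P (f \o V0).
Proof.
move=> mf f2; have fV2 := Lfun2_sample mf f2.
rewrite smeanE ExZ ?Lfun2_sum // Ex_sum //.
under eq_bigr do rewrite (Ex_same_law (V_law _) mf).
by rewrite sumr_const card_ord -[_ *+ n]mulr_natl; field.
Qed.

Lemma Cov_sample_iid {f g : Y -> R} :
  measurable_fun [set: Y] f -> measurable_fun [set: Y] g ->
  L2 (f \o V0) -> L2 (g \o V0) -> forall i j,
  Cov P (f \o V i) (g \o V j) =
  if i == j then Cov P (f \o V0) (g \o V0) else 0.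
Proof.
move=> mf mg f2 g2 i j; case: eqVneq => [<-|ij].
  exact: (Cov_same_law (V_law i) mf mg f2 g2).
exact: (Cov_indep (V_indep i j ij) mf mg (Lfun2_sample mf f2 i)
  (Lfun2_sample mg g2 j)).
Qed.

Lemma Cov_smean_iid (f g : Y -> R) :
  measurable_fun [set: Y] f -> measurable_fun [set: Y] g ->
  L2 (f \o V0) -> L2 (g \o V0) ->
  Cov P (smean (fun i => f \o V i)) (smean (fun i => g \o V i)) =
  Cov P (f \o V0) (g \o V0) / n%:R.
Proof.
move=> mf mg f2 g2; have [fV2 gV2] := (Lfun2_sample mf f2, Lfun2_sample mg g2).
rewrite !smeanE CovZl ?Lfun2Z ?Lfun2_sum // CovZr ?Lfun2_sum //.
rewrite Cov_suml ?Lfun2_sum //.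
under eq_bigr => i _.
  rewrite Cov_sumr //.
  under eq_bigr do rewrite (Cov_sample_iid mf mg f2 g2) eq_sym.
  rewrite -big_mkcond big_pred1_eq.
  over.
by rewrite sumr_const card_ord -[_ *+ n]mulr_natl; field.
Qed.

Lemma Phi_smean_iid (f g : Y -> R) :
  measurable_fun [set: Y] f -> measurable_fun [set: Y] g ->
  L2 (f \o V0) -> L2 (g \o V0) ->
  Phi P (smean (fun i => f \o V i)) (smean (fun i => g \o V i)) =
  Phi P (f \o V0) (g \o V0) / n%:R.
Proof.
move=> mf mg f2 g2.
by rewrite /Phi !Var_Cov !Cov_smean_iid // !Ex_smean_iid //; ring.
Qed.

End iid_sample_mean.

Definition control_variate {T : Type} {R : pzRingType} (X Y : T -> R)
  (c a : R) : T -> R := fun t => X t + a * (c - Y t).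

Lemma smean_control_variate {T : Type} {R : realType} n (X Y : 'I_n -> T -> R)
  (c a : R) : (0 < n)%N ->
  (fun t => smean X t + a * (c - smean Y t)) =
  smean (fun i => control_variate (X i) (Y i) c a).
Proof.
move=> n_gt0; apply: funext => t; rewrite /smean /control_variate /=.
rewrite big_split /= -mulr_sumr sumrB sumr_const card_ord -[_ *+ n]mulr_natl.
by field; rewrite pnatr_eq0 -lt0n.
Qed.

Section control_variate_moments.
Context {d : measure_display} {T : measurableType d} {R : realType}
  {P : probability T R}.
Local Notation L2 X := (X \in Lfun P 2%:E).
Implicit Types (X Y Z W : T -> R) (a b c : R).

Lemma control_variateE X Y c a :
  control_variate X Y c a = (X \+ (- a) \o* Y \+ cst (a * c))%R.
Proof. by apply: funext => t; rewrite /control_variate /=; ring. Qed.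

Lemma Lfun2_control_variate X Y c a :
  L2 X -> L2 Y -> L2 (control_variate X Y c a).
Proof.
by move=> X2 Y2; rewrite control_variateE !Lfun2D ?Lfun2Z ?Lfun_cst.
Qed.

Lemma Ex_control_variate X Y a : L2 X -> L2 Y ->
  Ex P (control_variate X Y (Ex P Y) a) = Ex P X.
Proof.
move=> X2 Y2.
rewrite control_variateE !ExD ?Lfun2D ?Lfun2Z ?Lfun_cst // ExZ // Ex_cst.
by ring.
Qed.

Lemma Cov_control_variate X Y Z W c c' a b : L2 X -> L2 Y -> L2 Z -> L2 W ->
  Cov P (control_variate X Y c a) (control_variate Z W c' b) =
  Cov P X Z - b * Cov P X W - a * Cov P Y Z + a * b * Cov P Y W.
Proof.
move=> X2 Y2 Z2 W2; rewrite !control_variateE.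
rewrite CovDl ?Lfun2D ?Lfun2Z ?Lfun_cst // Cov_cst_l addr0.
rewrite CovDr ?Lfun2D ?Lfun2Z ?Lfun_cst // Cov_cst_r addr0.
rewrite !CovDl ?Lfun2D ?Lfun2Z // !CovDr ?Lfun2Z // !CovZl ?Lfun2Z // !CovZr //.
by ring.
Qed.

Lemma Phi_control_variate A B C D a b : L2 A -> L2 B -> L2 C -> L2 D ->
  Phi P (control_variate A B (Ex P B) a) (control_variate C D (Ex P D) b) =
  cv_ratio_var (Var P A) (Cov P A B) (Var P B) (Var P C) (Cov P C D) (Var P D)
    (Cov P A C) (Cov P A D) (Cov P B C) (Cov P B D) (Ex P A) (Ex P C) a b.
Proof.
move=> A2 B2 C2 D2; rewrite /Phi !Var_Cov !Ex_control_variate //.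
by rewrite !Cov_control_variate // (CovC B A) (CovC D C) /cv_ratio_var; ring.
Qed.

End control_variate_moments.

Section vec4_measurable.
Context {d : measure_display} {T : measurableType d} {R : realType}
  (A B C D : {mfun T >-> R}).

Lemma measurable_vec4 : measurable_fun [set: T] (vec4 A B C D).
Proof. by do 3 apply: measurable_fun_pair => //. Qed.

HB.instance Definition _ :=
  isMeasurableFun.Build _ _ _ _ (vec4 A B C D) measurable_vec4.

End vec4_measurable.

Section sample_control_variates.
Context {d : measure_display} {T : measurableType d} {R : realType}
  {P : probability T R}.
Local Notation L2 X := ((X : T -> R) \in Lfun P 2%:E).
Local Notation R4 := (R * R * R * R)%type.

Lemma mutually_independent_pair {n} {V : 'I_n -> T -> R4} :
  mutually_independent P V -> forall i j, i != j ->
  forall S S', measurable S -> measurable S' ->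
  P (V i @^-1` S `&` V j @^-1` S') = (P (V i @^-1` S) * P (V j @^-1` S'))%E.
Proof.
move=> indep i j ij S S' mS mS'.
pose S2 k := if k == i then S else S'.
have mS2 k : measurable (S2 k) by rewrite /S2; case: ifP.
have := indep [set i; j]%SET S2 mS2.
rewrite big_setU1 ?big_set1 ?inE //= /S2 eqxx eq_sym (negbTE ij) => <-.
congr (P _); apply/seteqP; split => [t [Vi Vj] k|t Vij].
  by rewrite /= !inE => /orP[] /eqP ->; rewrite ?eqxx ?(eq_sym j) ?(negbTE ij).
split; first by have := Vij i; rewrite /S2 eqxx; apply; rewrite /= !inE eqxx.
have := Vij j; rewrite /S2 eq_sym (negbTE ij); apply.
by rewrite /= !inE eqxx orbT.
Qed.

Let measurable_control_variate_fun (p q : R4 -> R) (c a : R) :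
  measurable_fun [set: R4] p -> measurable_fun [set: R4] q ->
  measurable_fun [set: R4] (fun y => p y + a * (c - q y)).
Proof.
move=> mp mq; apply: measurable_funD => //; apply: measurable_funM => //.
exact: measurable_funB.
Qed.

Lemma Phi_sample_control_variates {n} {A B C D : {RV P >-> R}}
    {As Bs Cs Ds : 'I_n -> {RV P >-> R}} :
  L2 A -> L2 B -> L2 C -> L2 D -> (0 < n)%N ->
  (forall i, same_law P (vec4 (As i) (Bs i) (Cs i) (Ds i)) (vec4 A B C D)) ->
  mutually_independent P (fun i => vec4 (As i) (Bs i) (Cs i) (Ds i)) ->
  forall a b c c',
  Phi P (fun t => smean As t + a * (c - smean Bs t))
        (fun t => smean Cs t + b * (c' - smean Ds t)) =
  Phi P (control_variate A B c a) (control_variate C D c' b) / n%:R.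
Proof.
move=> A2 B2 C2 D2 n_gt0 law indep a b c c'.
rewrite !smean_control_variate //.
pose V i : {RV P >-> R4} := vec4 (As i) (Bs i) (Cs i) (Ds i).
have mA : measurable_fun [set: R4] (fun y => y.1.1.1).
  by do 2 apply: measurableT_comp => //.
have mB : measurable_fun [set: R4] (fun y => y.1.1.2).
  by apply: measurableT_comp => //; apply: measurableT_comp.
have mC : measurable_fun [set: R4] (fun y => y.1.2) by exact: measurableT_comp.
have mD : measurable_fun [set: R4] (fun y => y.2) by exact: measurable_snd.
apply: (Phi_smean_iid (V := V) (V0 := vec4 A B C D) law
  (mutually_independent_pair indep) n_gt0 (fun y => y.1.1.1 + a * (c - y.1.1.2))
  (fun y => y.1.2 + b * (c' - y.2))).
- exact: measurable_control_variate_fun mA mB.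
- exact: measurable_control_variate_fun mC mD.
- exact: Lfun2_control_variate.
- exact: Lfun2_control_variate.
Qed.

End sample_control_variates.

Theorem mainTheorem5 (d : measure_display) (T : measurableType d) (R : realType)
  (P : probability T R) (A B C D : {RV P >-> R}) (n : nat)
  (As Bs Cs Ds : 'I_n -> {RV P >-> R}) :
  (A : T -> R) \in Lfun P 2 -> (B : T -> R) \in Lfun P 2 ->
  (C : T -> R) \in Lfun P 2 -> (D : T -> R) \in Lfun P 2 ->
  0 < Var P B -> 0 < Var P D -> `|Corr P B D| < 1 ->
  Ex P A != 0 -> Ex P C != 0 ->
  (1 <= n)%N ->
  (forall i, same_law P (vec4 (As i) (Bs i) (Cs i) (Ds i)) (vec4 A B C D)) ->
  mutually_independent P (fun i => vec4 (As i) (Bs i) (Cs i) (Ds i)) ->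
  let Rr := Ex P A / Ex P C in
  let N := fun alpha : R => fun t =>
    smean As t + alpha * (Ex P B - smean Bs t) in
  let M := fun beta : R => fun t =>
    smean Cs t + beta * (Ex P D - smean Ds t) in
  let den := Var P B * Var P D - Cov P B D ^+ 2 in
  let alpha_o := (Var P D * Cov P A B - Rr * Var P D * Cov P B C
                  + Rr * Cov P B D * Cov P C D - Cov P B D * Cov P A D) / den in
  let beta_o := (Cov P B D * Cov P A B - Rr * Cov P B D * Cov P B C
                 + Rr * Var P B * Cov P C D - Var P B * Cov P A D) / (Rr * den) in
  (forall alpha beta, Phi P (N alpha_o) (M beta_o) <= Phi P (N alpha) (M beta)) /\
  (forall alpha beta,
     (forall alpha' beta', Phi P (N alpha) (M beta) <= Phi P (N alpha') (M beta')) ->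
     alpha = alpha_o /\ beta = beta_o) /\
  Phi P (N alpha_o) (M beta_o) <= Phi P (smean As) (smean Cs).
Proof.
move=> A2 B2 C2 D2 vB_gt0 vD_gt0 corr_lt1 eA_neq0 eC_neq0 n_gt0 law indep
  Rr N M den alpha_o beta_o.
have det_gt0 : Cov P B D ^+ 2 < Var P B * Var P D by exact: corr_lt1_sqr_lt.
pose G := cv_ratio_var (Var P A) (Cov P A B) (Var P B) (Var P C) (Cov P C D)
  (Var P D) (Cov P A C) (Cov P A D) (Cov P B C) (Cov P B D) (Ex P A) (Ex P C).
have ler_PhiG a b a' b' :
    (Phi P (N a) (M b) <= Phi P (N a') (M b')) = (G a b <= G a' b').
  rewrite !(Phi_sample_control_variates A2 B2 C2 D2 n_gt0 law indep).
  rewrite !Phi_control_variate //.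
  by rewrite ler_pM2r ?invr_gt0 ?ltr0n.
have G_min a b : G alpha_o beta_o <= G a b by exact: cv_ratio_var_min.
split; [|split].
- by move=> a b; rewrite ler_PhiG.
- move=> a b Nab_min.
  have Gab_min a' b' : G a b <= G a' b' by rewrite -ler_PhiG.
  exact: cv_ratio_var_argmin Gab_min.
- have -> : Phi P (smean As) (smean Cs) = Phi P (N 0) (M 0).
    by congr Phi; apply: funext => t; rewrite /N /M mul0r addr0.
  by rewrite ler_PhiG.
Qed.
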